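(* Let $C$ be a complex geodesic with polar point $p$, let $\mathrm G$ be a geodesic not included in $C$, and let $g,g'$ be distinct negative points of $\mathrm G$. If $\mathrm G\cap C\cap \mathrm BV\neq\varnothing$, then $\dfrac{\langle g,p\rangle\langle p,g'\rangle}{\langle g,g'\rangle}\in\mathbb R$. Suppose now that $\dfrac{\langle g,p\rangle\langle p,g'\rangle}{\langle g,g'\rangle}\notin\mathbb R$. Then there exists a unique point of $\mathrm G$ closest to $C$, and the condition $\mathrm{ta}(\mathrm G,C)=\mathrm{ta}(g,C)$ is equivalent to $\mathrm{Re}\dfrac{\langle p,g'\rangle\langle g,g\rangle}{\langle g,g'\rangle\langle p,g\rangle}=1$.
   Context: $V$ is a $3$-dimensional complex vector space with a hermitian form $\langle-,-\rangle$ of signature $++-$; $\mathrm BV=\{x\in\mathbb{CP}V:\langle x,x\rangle<0\}$ is the complex hyperbolic plane, $\mathrm SV$ the set of isotropic points, $\overline{\mathrm B}V=\mathrm BV\cup\mathrm SV$. Points are identified with representative vectors where expressions are projectively invariant. A complex geodesic is $C=\mathbb{CP}p^\perp\cap\overline{\mathrm B}V$ for a positive point $p$ (its polar point). A geodesic is a complete real geodesic in $\overline{\mathrm B}V$ (including its two ideal endpoints). For nonisotropic $x,y$, $\mathrm{ta}(x,y)=\frac{\langle x,y\rangle\langle y,x\rangle}{\langle x,x\rangle\langle y,y\rangle}$; for a negative point $g$, $\mathrm{ta}(g,C):=1-\mathrm{ta}(g,p)$ (equal to $\cosh^2$ of the distance from $g$ to $C$), and $\mathrm{ta}(\mathrm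 G,C):=\inf_{g\in\mathrm G\cap\mathrm BV}\mathrm{ta}(g,C)$. *)

From mathcomp Require Import all_boot all_algebra.
From mathcomp Require Import classical_sets reals.
From mathcomp.real_closed Require Import complex.
Import GRing.Theory Num.Theory.
Set Implicit Arguments. Unset Strict Implicit. Unset Printing Implicit Defensive.
Local Open Scope ring_scope.
Local Open Scope complex_scope.

Section CH2.
Variable R : realType.
Local Notation C := (R[i]).
Local Notation V := ('rV[C]_3).

(* The hermitian form on V = C^3 given by a matrix H (linear in the first
   argument, antilinear in the second): <x,y> = x H y^*. *)
Definition hf (H : 'M[C]_3) (x y : V) : C := (x *m H *m (map_mx conjc y)^T) 0 0.

(* H is hermitian of signature ++- : H^* = H and H is congruent to
   diag(1,1,-1) (Sylvester). *)
Definition J3 : 'M[C]_3 := diag_mx (\row_(i < 3) (if i == 2%:R then -1 else 1)).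
Definition herm_sig_ppm (H : 'M[C]_3) : Prop :=
  (map_mx conjc H)^T = H /\
  exists2 P : 'M[C]_3, P \in unitmx & P *m H *m (map_mx conjc P)^T = J3.

(* Points of CP(V) are represented by nonzero vectors; two vectors represent
   the same point iff they are proportional. *)
Definition same_point (x y : V) : Prop := exists2 a : C, a != 0 & y = a *: x.

Definition negative (H : 'M[C]_3) (x : V) : Prop := hf H x x < 0.
Definition positive (H : 'M[C]_3) (x : V) : Prop := 0 < hf H x x.
Definition in_closedB (H : 'M[C]_3) (x : V) : Prop := x != 0 /\ hf H x x <= 0.

(* The complex geodesic with polar point p: CP(p^perp) cap closed BV. *)
Definition in_cgeod (H : 'M[C]_3) (p x : V) : Prop :=
  in_closedB H x /\ hf H x p = 0.

(* Complete real geodesics (with their ideal endpoints): for a real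
   2-dimensional subspace W = R u + R w of V on which the form is real-valued
   and which contains a negative vector, the geodesic is
   { [x] in closed BV : x in C.W }.  A predicate G on vectors is a geodesic
   if it is of this form (G is then automatically invariant under nonzero
   complex scaling, i.e. a set of projective points). *)
Definition rspan_pt (u w x : V) : Prop :=
  exists (c : C) (a b : R), c != 0 /\ x = c *: (a%:C *: u + b%:C *: w).

Definition is_geodesic (H : 'M[C]_3) (G : V -> Prop) : Prop :=
  exists u w : V,
    [/\ forall a b : R, a%:C *: u + b%:C *: w = 0 -> a = 0 /\ b = 0,
        hf H u w \is Num.real,
        (exists a b : R, negative H (a%:C *: u + b%:C *: w)) &
        forall x, G x <-> (in_closedB H x /\ rspan_pt u w x)].

Definition ta (H : 'M[C]_3) (x y : V) : C :=
  hf H x y * hf H y x / (hf H x x * hf H y y).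

Definition ta_cg (H : 'M[C]_3) (g p : V) : C := 1 - ta H g p.

Definition ta_geod_cg (H : 'M[C]_3) (G : V -> Prop) (p : V) : R :=
  inf [set complex.Re (ta_cg H g p) | g in [set g | G g /\ negative H g]].

(* x is a point of G closest to C: it minimizes the distance to C, i.e.
   ta(., C) = cosh^2(dist(., C)), among the points of G in BV. *)
Definition closest_to_cg (H : 'M[C]_3) (G : V -> Prop) (p x : V) : Prop :=
  [/\ G x, negative H x &
      forall y, G y -> negative H y -> ta_cg H x p <= ta_cg H y p].

End CH2.

(* Write g = c0 g0 and g' = c1 g1 with g0, g1 in the real plane W spanned by
   G; the hermitian form is real on W, of signature (1,1) by reverse
   Cauchy-Schwarz.  With h = <g0,g0> g1 - <g1,g0> g0, orthogonal to g0 in W,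
   the negative points of G are the c (x g0 + y h) with s x^2 > t y^2, where
   s = - <g0,g0> and t = <h,h> are positive, and, for alpha = <g0,p> and
   beta = <h,p>,
     ta(c (x g0 + y h), C) = 1 + |x alpha + y beta|^2 / ((s x^2 - t y^2) <p,p>).
   The cross-ratio <g,p><p,g'>/<g,g'> is alpha conj<g1,p> / <g0,g1>, and
   Im (alpha conj beta) = <g0,g0> Im (alpha conj<g1,p>).  A point of G in C
   and BV gives x alpha + y beta = 0, whence Im (alpha conj beta) = 0 and the
   cross-ratio is real.  Otherwise A x^2 + 2 B x y + C y^2 = |x alpha + y beta|^2
   is positive definite, and its ratio to s x^2 - t y^2 is minimal on the cone
   along a single line y = r x: this is the unique closest point.  The point g
   (the line y = 0) is minimal exactly when B = Re (alpha conj beta) = 0,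
   which unfolds to Re (<p,g'><g,g> / (<g,g'><p,g>)) = 1. *)

From mathcomp Require Import all_boot all_order all_algebra.
From mathcomp Require Import classical_sets reals.
From mathcomp.real_closed Require Import complex.
From mathcomp Require Import ring lra.
Import Order.TTheory GRing.Theory Num.Theory.
Set Implicit Arguments. Unset Strict Implicit. Unset Printing Implicit Defensive.
Local Open Scope ring_scope.
Local Open Scope complex_scope.

Section QuadRatio.
Variables (R : rcfType) (s t A B C : R).
Hypotheses (s_gt0 : 0 < s) (t_gt0 : 0 < t) (A_gt0 : 0 < A) (discr_lt0 : B ^+ 2 < A * C).

Let num x y := A * x ^+ 2 + 2 * B * x * y + C * y ^+ 2.
Let den x y := s * x ^+ 2 - t * y ^+ 2.
Definition quad_ratio (x y : R) := num x y / den x y.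

Let K := C * s + A * t.

(* The root of B t r^2 + K r + B s = 0 (the equation of the critical points of
   y |-> quad_ratio 1 y) of smaller modulus, written so as not to divide by B. *)
Definition quad_ratio_argmin : R :=
  - 2 * B * s / (K + Num.sqrt (K ^+ 2 - 4 * B ^+ 2 * s * t)).

Local Notation r := quad_ratio_argmin.

Let C_gt0 : 0 < C.
Proof. rewrite -(pmulr_rgt0 _ A_gt0); exact: le_lt_trans (sqr_ge0 B) discr_lt0. Qed.

Let K_gt0 : 0 < K. Proof. by rewrite /K addr_gt0 ?mulr_gt0. Qed.

Let discr_gt0 : 0 < K ^+ 2 - 4 * B ^+ 2 * s * t.
Proof.
have -> : K ^+ 2 - 4 * B ^+ 2 * s * t = (C * s - A * t) ^+ 2 + 4 * (s * t) * (A * C - B ^+ 2).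
  by rewrite /K; ring.
have := sqr_ge0 (C * s - A * t); have : 0 < s * t * (A * C - B ^+ 2).
  by rewrite !mulr_gt0 // subr_gt0.
lra.
Qed.

Let S := Num.sqrt (K ^+ 2 - 4 * B ^+ 2 * s * t).

Let S_sqr : S ^+ 2 = K ^+ 2 - 4 * B ^+ 2 * s * t.
Proof. by rewrite sqr_sqrtr // ltW. Qed.

Let KS_gt0 : 0 < K + S.
Proof. by rewrite ltr_wpDr ?sqrtr_ge0. Qed.

Let KS_neq0 : K + S != 0. Proof. by rewrite gt_eqF. Qed.

Lemma quad_ratio_argmin_root : B * t * r ^+ 2 + K * r + B * s = 0.
Proof.
apply: (mulIf (expf_neq0 2 KS_neq0)); rewrite mul0r.
have -> : (B * t * r ^+ 2 + K * r + B * s) * (K + S) ^+ 2 =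
          B * s * (S ^+ 2 - K ^+ 2 + 4 * B ^+ 2 * s * t).
  by rewrite /quad_ratio_argmin -/S; field.
by rewrite S_sqr; ring.
Qed.

Lemma quad_ratio_argmin_den_gt0 : 0 < den 1 r.
Proof.
rewrite /den expr1n mulr1 -(pmulr_lgt0 _ (exprn_gt0 2 KS_gt0)).
have -> : (s - t * r ^+ 2) * (K + S) ^+ 2 =
          s * ((K ^+ 2 - 4 * B ^+ 2 * s * t) + S * (2 * K + S)).
  by rewrite /quad_ratio_argmin -/S; field.
by rewrite mulr_gt0 // ltr_wpDr // mulr_ge0 ?sqrtr_ge0 // addr_ge0 ?sqrtr_ge0 // mulr_ge0 // ltW.
Qed.

Let num_argmin_gt0 : 0 < num 1 r.
Proof.
rewrite -(pmulr_rgt0 _ C_gt0).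
have -> : C * num 1 r = (C * r + B) ^+ 2 + (A * C - B ^+ 2).
  by rewrite /num; ring.
by rewrite ltr_wpDl ?sqr_ge0 // subr_gt0.
Qed.

Lemma quad_ratio_sub_argmin x y : den x y != 0 ->
  quad_ratio x y - quad_ratio 1 r =
  (den 1 r * C + num 1 r * t) * (y - r * x) ^+ 2 / (den x y * den 1 r).
Proof.
move=> den_neq0; have denr_neq0 := gt_eqF quad_ratio_argmin_den_gt0.
have -> : quad_ratio x y - quad_ratio 1 r =
    (num x y * den 1 r - num 1 r * den x y) / (den x y * den 1 r).
  by rewrite /quad_ratio; field; rewrite den_neq0 denr_neq0.
congr (_ / _).
have -> : num x y * den 1 r - num 1 r * den x y =
    (den 1 r * C + num 1 r * t) * (y - r * x) ^+ 2
    + 2 * (B * t * r ^+ 2 + K * r + B * s) * x * (y - r * x).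
  by rewrite /num /den /K; ring.
by rewrite quad_ratio_argmin_root !mulr0 !mul0r addr0.
Qed.

Let kappa_gt0 : 0 < den 1 r * C + num 1 r * t.
Proof. by rewrite addr_gt0 ?mulr_gt0 ?quad_ratio_argmin_den_gt0. Qed.

Lemma quad_ratio_argmin_le x y : 0 < den x y -> quad_ratio 1 r <= quad_ratio x y.
Proof.
move=> den_gt0; rewrite -subr_ge0 quad_ratio_sub_argmin ?gt_eqF //.
rewrite divr_ge0 ?(mulr_ge0 (ltW kappa_gt0) (sqr_ge0 _)) //.
by rewrite ltW ?mulr_gt0 ?quad_ratio_argmin_den_gt0.
Qed.

Lemma quad_ratio_argmin_unique x y :
  0 < den x y -> quad_ratio x y <= quad_ratio 1 r -> y = r * x.
Proof.
move=> den_gt0; rewrite -subr_le0 quad_ratio_sub_argmin ?gt_eqF //.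
rewrite pmulr_lle0 ?invr_gt0 ?mulr_gt0 ?quad_ratio_argmin_den_gt0 //.
rewrite pmulr_rle0 // => sqr_le0; apply/eqP; rewrite -subr_eq0 -sqrf_eq0.
by rewrite eq_le sqr_le0 sqr_ge0.
Qed.

Lemma quad_ratio_argmin_eq0 : (r == 0) = (B == 0).
Proof.
rewrite /quad_ratio_argmin -/S mulf_eq0 invr_eq0 (negbTE KS_neq0) orbF.
by rewrite !mulf_eq0 (gt_eqF s_gt0) oppr_eq0 pnatr_eq0 orbF.
Qed.

Lemma quad_ratio_min_at10 :
  (forall x y, 0 < den x y -> quad_ratio 1 0 <= quad_ratio x y) <-> B = 0.
Proof.
have den10_gt0 : 0 < den 1 0 by rewrite /den expr1n expr0n /= mulr1 mulr0 subr0.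
split=> [min10|B0 x y den_gt0].
  apply/eqP; rewrite -quad_ratio_argmin_eq0; apply/eqP.
  have := quad_ratio_argmin_unique den10_gt0 (min10 _ _ quad_ratio_argmin_den_gt0).
  by rewrite mulr1.
have /eqP r0 : r == 0 by rewrite quad_ratio_argmin_eq0 B0.
by rewrite -r0 quad_ratio_argmin_le.
Qed.

End QuadRatio.

Section ComplexIdentities.
Variable R : rcfType.
Implicit Types (a b : R[i]) (x y : R).

Lemma mulcJ_gt0 a : a != 0 -> 0 < a * a^*%C.
Proof. by move=> a_neq0; rewrite lt_def mulcJ_ge0 mulf_neq0 ?conjc_eq0. Qed.

Lemma mulcJ_rcomb a b x y :
  (x%:C * a + y%:C * b) * (x%:C * a + y%:C * b)^*%C =
  (complex.Re (a * a^*%C) * x ^+ 2 + 2 * complex.Re (a * b^*%C) * x * y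
   + complex.Re (b * b^*%C) * y ^+ 2)%:C.
Proof.
case: a b => [a1 a2] [b1 b2] /=; rewrite -!complexr0; simpc.
by congr (_ +i* _); ring.
Qed.

Lemma lagrange_identity a b :
  complex.Re (a * a^*%C) * complex.Re (b * b^*%C) - complex.Re (a * b^*%C) ^+ 2 =
  complex.Im (a * b^*%C) ^+ 2.
Proof. by case: a b => [a1 a2] [b1 b2] /=; ring. Qed.

Lemma ltc0R x : (x%:C < 0) = (x < 0).
Proof. by rewrite ltcE /= eqxx. Qed.

Lemma gtc0R x : (0 < x%:C) = (0 < x).
Proof. by rewrite ltcE /= eqxx. Qed.

Lemma Im_mulcJ_eq0 a b x y : x%:C * a + y%:C * b = 0 -> (x != 0) || (y != 0) ->
  complex.Im (a * b^*%C) = 0.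
Proof.
case: a b => [a1 a2] [b1 b2]; rewrite -!complexr0; simpc => -[e1 e2] /=.
have ex : x * (- (a1 * b2) + a2 * b1) = b1 * (x * a2 + y * b2) - b2 * (x * a1 + y * b1).
  by ring.
have ey : y * (- (a1 * b2) + a2 * b1) = a2 * (x * a1 + y * b1) - a1 * (x * a2 + y * b2).
  by ring.
rewrite e1 e2 !mulr0 subrr in ex ey.
by case/orP=> [x_neq0|y_neq0]; [apply: (mulfI x_neq0) | apply: (mulfI y_neq0)];
  rewrite mulr0.
Qed.

Lemma Im_mulcJ_sub a b x y :
  complex.Im (a * (x%:C * b^*%C - y%:C * a^*%C)) = x * complex.Im (a * b^*%C).
Proof. by case: a b => [a1 a2] [b1 b2]; rewrite -!complexr0; simpc => /=; ring. Qed.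

Lemma Re_mulcJ_sub a b x y :
  complex.Re (a * (x%:C * b^*%C - y%:C * a^*%C)) =
  x * complex.Re (a * b^*%C) - y * complex.Re (a * a^*%C).
Proof. by case: a b => [a1 a2] [b1 b2]; rewrite -!complexr0; simpc => /=; ring. Qed.

Lemma Re_mulcJ_div a b x y : y != 0 -> a != 0 ->
  complex.Re (b^*%C * x%:C / (y%:C * a^*%C)) =
  x * complex.Re (a * b^*%C) / (y * complex.Re (a * a^*%C)).
Proof.
case: a b => [a1 a2] [b1 b2] y_neq0 a_neq0.
have N_neq0 : a1 * a1 + a2 * a2 != 0.
  apply: contra a_neq0 => /eqP N0; rewrite eq_complex /=.
  by apply/andP; split; apply/eqP; nra.
rewrite -!complexr0; simpc => /=.
rewrite (_ : (y * a1) ^+ 2 + (- (y * a2)) ^+ 2 = y ^+ 2 * (a1 * a1 + a2 * a2)); last by ring.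
by field; rewrite N_neq0 y_neq0.
Qed.

Lemma lagrange_lt a b : complex.Im (a * b^*%C) != 0 ->
  complex.Re (a * b^*%C) ^+ 2 < complex.Re (a * a^*%C) * complex.Re (b * b^*%C).
Proof. by move=> Im_neq0; rewrite -subr_gt0 lagrange_identity exprn_even_gt0. Qed.

Lemma Re_mulcJ_gt0 a : a != 0 -> 0 < complex.Re (a * a^*%C).
Proof. by move/mulcJ_gt0; rewrite ltcE => /andP[]. Qed.

End ComplexIdentities.

Section RealCombinations.
Variables (R : rcfType) (V : lmodType R[i]).
Implicit Types (u w : V) (a b c d x y : R).

(* Locked, so that matching against the lemmas below never unfolds it. *)
Fact rcomb_key : unit. Proof. by []. Qed.
Definition rcomb : V -> V -> R -> R -> V :=
  locked_with rcomb_key (fun u w a b => a%:C *: u + b%:C *: w).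
Canonical rcomb_unlockable := [unlockable fun rcomb].

Lemma rcombE u w a b : rcomb u w a b = a%:C *: u + b%:C *: w.
Proof. by rewrite unlock. Qed.

Lemma rcomb_comp u w a b c d x y :
  rcomb (rcomb u w a b) (rcomb u w c d) x y = rcomb u w (x * a + y * c) (x * b + y * d).
Proof.
by rewrite !rcombE !scalerDr !scalerA !rmorphD !rmorphM !scalerDl addrACA.
Qed.

Lemma rcombZ u w a b x : rcomb u w (x * a) (x * b) = x%:C *: rcomb u w a b.
Proof. by rewrite !rcombE scalerDr !scalerA !rmorphM. Qed.

Lemma rcomb10 u w : rcomb u w 1 0 = u.
Proof. by rewrite !rcombE scale1r scale0r addr0. Qed.

Lemma rcomb_basis u w a b c d : a * d - b * c != 0 ->
  forall x y, exists x' y', rcomb u w x y = rcomb (rcomb u w a b) (rcomb u w c d) x' y'.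
Proof.
move=> det_neq0 x y.
exists ((x * d - y * c) / (a * d - b * c)), ((a * y - b * x) / (a * d - b * c)).
by rewrite rcomb_comp; congr rcomb; field.
Qed.
End RealCombinations.

Section Forms.
Variables (R : rcfType) (n : nat) (H : 'M[R[i]]_n).
Implicit Types (u v w x y : 'rV[R[i]]_n) (k : R[i]).
Local Notation "''[' u , v ]" := (form conjc H u v) : ring_scope.

Definition gram u v := '[u, v] * '[v, u] - '[u, u] * '[v, v].

Lemma form_rcombl u w a b v : '[rcomb u w a b, v] = a%:C * '[u, v] + b%:C * '[w, v].
Proof. by rewrite !rcombE formDl !formZl. Qed.

Lemma form_rcombr v u w a b : '[v, rcomb u w a b] = a%:C * '[v, u] + b%:C * '[v, w].
Proof. by rewrite !rcombE formDr !formZr /= oppr0. Qed.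

Lemma gram_subZ u v k : gram (u - k *: v) v = gram u v.
Proof.
rewrite /gram !(formDl, formDr, formNl, formNr, formZl, formZr) /=.
move: '[u, v] '[v, u] '[u, u] '[v, v] => uv vu uu vv; ring.
Qed.

Lemma gram_rcomb u w a b c d :
  gram (rcomb u w a b) (rcomb u w c d) = ((a * d - b * c) ^+ 2)%:C * gram u w.
Proof.
rewrite /gram !(form_rcombl, form_rcombr) rmorphXn rmorphB !rmorphM /=.
move: '[u, w] '[w, u] '[u, u] '[w, w] => uw wu uu ww; ring.
Qed.

Hypothesis H_herm : (map_mx conjc H)^T = H.

Lemma formJ u v : '[u, v] = '[v, u]^*%C.
Proof.
rewrite (formC (eps := false)) ?expr0 ?mul1r //; first exact: conjcK.
by rewrite sesquiE expr0 scale1r -map_trmx H_herm.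
Qed.

Lemma form_selfE u : '[u, u] = (complex.Re '[u, u])%:C.
Proof.
have := formJ u u; case: '[u, u] => a b /= [] /eqP.
by rewrite -subr_eq0 opprK -mulr2n mulrn_eq0 => /eqP ->.
Qed.

Lemma form_rcomb_real u w a b c d : '[u, w] \is Num.real ->
  '[rcomb u w a b, rcomb u w c d] \is Num.real.
Proof.
move=> /RRe_real uw; rewrite form_rcombl !form_rcombr (formJ w u) -uw conjc_real.
by rewrite (form_selfE u) (form_selfE w) ?(rpredD, rpredM) ?complex_real.
Qed.

Lemma formZZ_lt0 k v : k != 0 -> ('[k *: v, k *: v] < 0) = ('[v, v] < 0).
Proof. by move=> k_neq0; rewrite formZl formZr mulrA pmulr_rlt0 ?mulcJ_gt0. Qed.

Definition orthogonalize u v := '[u, u] *: v - '[v, u] *: u.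

Lemma form_orthogonalizel u v : '[orthogonalize u v, u] = 0.
Proof. by rewrite formDl formNl !formZl mulrC subrr. Qed.

Lemma form_orthogonalizer u v : '[u, orthogonalize u v] = 0.
Proof.
by rewrite formDr formNr !formZr /= -(formJ u v) -(formJ u u) mulrC subrr.
Qed.

Lemma form_orthogonalize u v :
  '[orthogonalize u v, orthogonalize u v] = - '[u, u] * gram v u.
Proof.
rewrite /orthogonalize /gram !(formDl, formDr, formNl, formNr, formZl, formZr) /=.
rewrite -(formJ u v) -(formJ u u).
move: '[u, v] '[v, u] '[u, u] '[v, v] => uv vu uu vv; ring.
Qed.
End Forms.

Section Signature.
Variables (R : realType) (H : 'M[R[i]]_3).
Implicit Types (x y z : 'rV[R[i]]_3).
Local Notation "''[' u , v ]" := (form conjc H u v) : ring_scope.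

Lemma form_J3 z : form conjc (J3 R) z z =
  \sum_(j < 3) (if j == 2%:R then -1 else 1) * (z 0 j * (z 0 j)^*%C).
Proof.
rewrite /form /J3 mul_mx_diag mxE; apply: eq_bigr => j _; rewrite !mxE.
by rewrite mulrCA mulrA.
Qed.

Lemma form_J3_gt0 z : z 0 2%:R = 0 -> z != 0 -> 0 < form conjc (J3 R) z z.
Proof.
move=> z2 z_neq0; have norm_ge0 j : 0 <= z 0 j * (z 0 j)^*%C by exact: mulcJ_ge0.
have -> : form conjc (J3 R) z z = \sum_(j < 3) z 0 j * (z 0 j)^*%C.
  rewrite form_J3; apply: eq_bigr => j _.
  by case: eqP => [->|_]; rewrite ?z2 ?mul0r ?mulr0 ?mul1r.
rewrite lt_def sumr_ge0 // andbT; apply: contra z_neq0.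
move=> /eqP /(psumr_eq0P (fun j _ => norm_ge0 j)) zz0.
apply/eqP/rowP => j; rewrite mxE; apply/eqP.
by have /eqP := zz0 j isT; rewrite mulf_eq0 conjc_eq0 orbb.
Qed.

Lemma form_J3_coord P x y : P \in unitmx -> P *m H *m (map_mx conjc P)^T = J3 R ->
  '[x, y] = form conjc (J3 R) (x *m invmx P) (y *m invmx P).
Proof.
move=> P_unit HP.
have -> : H = invmx P *m J3 R *m (map_mx conjc (invmx P))^T.
  rewrite -HP !mulmxA mulVmx // mul1mx -mulmxA -trmx_mul -map_mxM mulVmx //.
  by rewrite map_mx1 trmx1 mulmx1.
by rewrite /form trmx_mul map_mxM !mulmxA map_trmx.
Qed.

(* Reverse Cauchy-Schwarz.  In coordinates where the form is diag(1,1,-1), the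
   vector z = x - k y with vanishing last coordinate has <z,z> > 0, and
   gram x y = gram z y >= - <z,z> <y,y>. *)
Lemma gram_gt0 x y : herm_sig_ppm H -> '[y, y] < 0 -> (forall k, x != k *: y) ->
  0 < gram H x y.
Proof.
case=> H_herm [P P_unit HP] y_neg x_indep.
pose l (v : 'rV[R[i]]_3) := (v *m invmx P) 0 2%:R.
have pos_ker v : l v = 0 -> v != 0 -> 0 < '[v, v].
  move=> lv v_neq0; rewrite (form_J3_coord _ _ P_unit HP) form_J3_gt0 //.
  by apply: contraNneq v_neq0 => /(congr1 (mulmx^~ P)); rewrite mulmxKV // mul0mx => ->.
have ly_neq0 : l y != 0.
  apply/eqP => ly0; have [y0|y_neq0] := eqVneq y 0.
    by move: y_neg; rewrite y0 form0l ltxx.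
  by have := lt_trans y_neg (pos_ker y ly0 y_neq0); rewrite ltxx.
pose z := x - (l x / l y) *: y.
have z_pos : 0 < '[z, z].
  have lB v1 v2 k : l (v1 - k *: v2) = l v1 - k * l v2.
    by rewrite /l mulmxBl -scalemxAl; move: (v1 *m _) (v2 *m _) => u v; rewrite !mxE.
  apply: pos_ker; first by rewrite lB divfK // subrr.
  by rewrite subr_eq0 x_indep.
rewrite -(gram_subZ H x y (l x / l y)) -/z /gram (formJ H_herm y z).
by rewrite ltr_wpDl ?mulcJ_ge0 // -mulrN mulr_gt0 // oppr_gt0.
Qed.
End Signature.

Lemma hf_form (R : realType) (H : 'M[R[i]]_3) : hf H =2 form conjc H.
Proof. by move=> x y; rewrite /hf /form -map_trmx. Qed.

Lemma taZl (R : realType) (H : 'M[R[i]]_3) (c : R[i]) (x y : 'rV[R[i]]_3) :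
  c != 0 -> ta H (c *: x) y = ta H x y.
Proof.
move=> c_neq0; rewrite /ta !hf_form !(formZl, formZr) /=.
have cJ_neq0 : c^*%C != 0 by rewrite conjc_eq0.
move: (c^*%C) cJ_neq0 (form conjc H x y) (form conjc H y x) (form conjc H x x)
  (form conjc H y y) => k k_neq0 xy yx xx yy.
rewrite (_ : c * xy * (k * yx) = (c * k) * (xy * yx)); last by ring.
rewrite (_ : c * (k * xx) * yy = (c * k) * (xx * yy)); last by ring.
by rewrite -mulf_div divff ?mul1r // mulf_neq0.
Qed.

Lemma cross_ratioZ (R : realType) (H : 'M[R[i]]_3) (c d : R[i]) (x y z : 'rV[R[i]]_3) :
  c != 0 -> d != 0 ->
  hf H (c *: x) z * hf H z (d *: y) / hf H (c *: x) (d *: y) =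
  hf H x z * hf H z y / hf H x y.
Proof.
move=> c_neq0 d_neq0; rewrite !hf_form !(formZl, formZr) /=.
have dJ_neq0 : d^*%C != 0 by rewrite conjc_eq0.
move: (d^*%C) dJ_neq0 (form conjc H x z) (form conjc H z y) (form conjc H x y).
move=> k k_neq0 xz zy xy.
rewrite (_ : c * xz * (k * zy) = (c * k) * (xz * zy)); last by ring.
by rewrite mulrA -mulf_div divff ?mul1r // mulf_neq0.
Qed.

Lemma cross_ratio2Z (R : realType) (H : 'M[R[i]]_3) (c d : R[i]) (x y z : 'rV[R[i]]_3) :
  c != 0 -> d != 0 ->
  hf H z (d *: y) * hf H (c *: x) (c *: x) / (hf H (c *: x) (d *: y) * hf H z (c *: x)) =
  hf H z y * hf H x x / (hf H x y * hf H z x).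
Proof.
move=> c_neq0 d_neq0; rewrite !hf_form !(formZl, formZr) /=.
have cJ_neq0 : c^*%C != 0 by rewrite conjc_eq0.
have dJ_neq0 : d^*%C != 0 by rewrite conjc_eq0.
move: (c^*%C) (d^*%C) cJ_neq0 dJ_neq0 (form conjc H z y) (form conjc H x x)
  (form conjc H x y) (form conjc H z x) => k l k_neq0 l_neq0 zy xx xy zx.
rewrite (_ : l * zy * (c * (k * xx)) = (c * k * l) * (zy * xx)); last by ring.
rewrite (_ : c * (l * xy) * (k * zx) = (c * k * l) * (xy * zx)); last by ring.
by rewrite -mulf_div divff ?mul1r // !mulf_neq0.
Qed.

Lemma not_same_point_indep (R : realType) (x y v w : 'rV[R[i]]_3) (c d : R[i]) :
  c != 0 -> y != 0 -> x = c *: v -> y = d *: w -> ~ same_point x y ->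
  forall k, w != k *: v.
Proof.
move=> c_neq0 y_neq0 xE yE xy k; apply/eqP => wE; apply: xy.
have dk_neq0 : d * k != 0.
  by apply: contraNneq y_neq0; rewrite yE wE scalerA => ->; rewrite scale0r.
exists (d * k / c); first by rewrite mulf_neq0 ?invr_eq0.
by rewrite yE wE xE !scalerA divfK.
Qed.

Lemma inf_eq_lbound (R : realType) (S : set R) (v : R) :
  S v -> has_lbound S -> inf S = v <-> lbound S v.
Proof.
move=> Sv S_lb; split=> [<-|v_lb]; first exact: ge_inf.
by apply/le_anti; rewrite (ge_inf S_lb Sv) lb_le_inf //; exists v.
Qed.

Section ClosestPoint.
Variables (R : realType) (H : 'M[R[i]]_3) (G : 'rV[R[i]]_3 -> Prop) (p : 'rV[R[i]]_3)
  (pl : R -> R -> 'rV[R[i]]_3) (s t A B C pp : R).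
Local Notation cone x y := (0 < s * x ^+ 2 - t * y ^+ 2).
Hypotheses (s_gt0 : 0 < s) (t_gt0 : 0 < t) (A_gt0 : 0 < A) (discr_lt0 : B ^+ 2 < A * C)
  (pp_gt0 : 0 < pp).
Hypotheses (G_pl : forall v, G v -> negative H v ->
              exists c x y, [/\ c != 0, v = c *: pl x y & cone x y])
  (pl_G : forall x y, cone x y -> G (pl x y) /\ negative H (pl x y))
  (plZ : forall k x y, pl (k * x) (k * y) = k%:C *: pl x y)
  (ta_pl : forall c x y, c != 0 -> cone x y ->
              ta_cg H (c *: pl x y) p = (1 + quad_ratio s t A B C x y / pp)%:C).

Local Notation r := (quad_ratio_argmin s t A B C).

Let cone_argmin : cone 1 r. Proof. exact: quad_ratio_argmin_den_gt0. Qed.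

Let ta_pl_le c x y c' x' y' : c != 0 -> cone x y -> c' != 0 -> cone x' y' ->
  (ta_cg H (c *: pl x y) p <= ta_cg H (c' *: pl x' y') p) =
  (quad_ratio s t A B C x y <= quad_ratio s t A B C x' y').
Proof.
by move=> *; rewrite !ta_pl // lecR lerD2l ler_pM2r ?invr_gt0.
Qed.

Lemma closest_argmin : closest_to_cg H G p (pl 1 r).
Proof.
have [G_xs xs_neg] := pl_G cone_argmin.
split; [exact: G_xs | exact: xs_neg | move=> v Gv v_neg].
have [c [x [y [c_neq0 -> cone_xy]]]] := G_pl Gv v_neg.
by rewrite -[pl 1 r]scale1r ta_pl_le ?oner_neq0 // quad_ratio_argmin_le.
Qed.

Lemma closest_unique v : closest_to_cg H G p v -> same_point (pl 1 r) v.
Proof.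
case=> Gv v_neg v_min; have [c [x [y [c_neq0 vE cone_xy]]]] := G_pl Gv v_neg.
have [G_xs xs_neg _] := closest_argmin.
have := v_min _ G_xs xs_neg; rewrite vE -[pl 1 r]scale1r ta_pl_le ?oner_neq0 //.
move=> /(quad_ratio_argmin_unique s_gt0 t_gt0 A_gt0 discr_lt0 cone_xy) yE.
have x_neq0 : x != 0.
  by apply: contraTneq cone_xy => x0; rewrite yE x0 mulr0 expr0n /= !mulr0 subrr ltxx.
exists (c * x%:C); first by rewrite mulf_neq0 // fmorph_eq0.
by rewrite yE -[x in pl x _]mulr1 (mulrC _ x) plZ scalerA scale1r.
Qed.

Lemma ta_geod_cg_at10 c : c != 0 -> G (c *: pl 1 0) -> negative H (c *: pl 1 0) ->
  ta_geod_cg H G p = complex.Re (ta_cg H (c *: pl 1 0) p) <-> B = 0.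
Proof.
move=> c_neq0 Gg g_neg.
have cone10 : cone 1 0 by rewrite expr1n expr0n /= mulr1 mulr0 subr0.
have [G_xs xs_neg xs_min] := closest_argmin.
rewrite /ta_geod_cg inf_eq_lbound; first last.
- exists (complex.Re (ta_cg H (pl 1 r) p)) => _ [v [Gv v_neg] <-].
  by have := xs_min v Gv v_neg; rewrite lecE => /andP[].
- by exists (c *: pl 1 0).
rewrite -(quad_ratio_min_at10 s_gt0 t_gt0 A_gt0 discr_lt0).
split=> [lb x y cone_xy|min10 _ [v [Gv v_neg] <-]].
  have Gxy : G (1 *: pl x y) /\ negative H (1 *: pl x y) by rewrite scale1r; exact: pl_G.
  have := lb _ (ex_intro2 _ _ _ Gxy erefl).
  by rewrite !ta_pl ?oner_neq0 //= lerD2l ler_pM2r ?invr_gt0.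
have [c' [x [y [c'_neq0 -> cone_xy]]]] := G_pl Gv v_neg.
by rewrite !ta_pl //= lerD2l ler_pM2r ?invr_gt0 // min10.
Qed.

End ClosestPoint.

Section Geodesic.
Variables (R : realType) (H : 'M[R[i]]_3) (G : 'rV[R[i]]_3 -> Prop)
  (u w p : 'rV[R[i]]_3) (a0 b0 a1 b1 : R).
Local Notation "''[' x , y ]" := (form conjc H x y) : ring_scope.
Local Notation g0 := (rcomb u w a0 b0).
Local Notation g1 := (rcomb u w a1 b1).
Hypotheses (H_sig : herm_sig_ppm H) (uw_real : '[u, w] \is Num.real)
  (G_def : forall x, G x <-> in_closedB H x /\ rspan_pt u w x)
  (p_pos : 0 < '[p, p]) (g0_neg : '[g0, g0] < 0) (g1_indep : forall k, g1 != k *: g0).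

Let H_herm : (map_mx conjc H)^T = H := proj1 H_sig.
Let q00 := complex.Re '[g0, g0].
Let q01 := complex.Re '[g0, g1].
Let h := orthogonalize H g0 g1.
Let alpha := '[g0, p].
Let beta := '[h, p].
Let s := - q00.
Let t := complex.Re '[h, h].
Let pp := complex.Re '[p, p].
Let A := complex.Re (alpha * alpha^*%C).
Let B := complex.Re (alpha * beta^*%C).
Let C := complex.Re (beta * beta^*%C).
Local Notation plane := (rcomb g0 h).

Let g0g0E : '[g0, g0] = q00%:C. Proof. exact: form_selfE. Qed.
Let g0g1E : '[g0, g1] = q01%:C. Proof. exact/esym/RRe_real/form_rcomb_real. Qed.
Let g1g0E : '[g1, g0] = q01%:C.
Proof. by rewrite (formJ H_herm g1 g0) g0g1E; exact: conjc_real. Qed.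
Let hhE : '[h, h] = t%:C. Proof. exact: form_selfE. Qed.
Let ppE : '[p, p] = pp%:C. Proof. exact: form_selfE. Qed.
Let hg0 : '[h, g0] = 0. Proof. exact: form_orthogonalizel. Qed.
Let g0h : '[g0, h] = 0. Proof. exact: form_orthogonalizer. Qed.

Let s_gt0 : 0 < s. Proof. by rewrite oppr_gt0 -ltc0R -g0g0E. Qed.
Let q00_neq0 : q00 != 0. Proof. by rewrite -oppr_eq0 lt0r_neq0. Qed.
Let t_gt0 : 0 < t.
Proof.
rewrite -gtc0R -hhE /h form_orthogonalize // mulr_gt0 ?oppr_gt0 //.
exact: gram_gt0.
Qed.
Let pp_gt0 : 0 < pp. Proof. by rewrite -gtc0R -ppE. Qed.

Let h_rcomb0 : h = rcomb g0 g1 (- q01) q00.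
Proof. by rewrite rcombE /h /orthogonalize g0g0E g1g0E rmorphN scaleNr addrC. Qed.

Let h_rcomb : h = rcomb u w (- q01 * a0 + q00 * a1) (- q01 * b0 + q00 * b1).
Proof. by rewrite h_rcomb0 rcomb_comp. Qed.

Let betaJ : beta^*%C = q00%:C * '[g1, p]^*%C - q01%:C * alpha^*%C.
Proof.
rewrite /beta -(formJ H_herm p h) h_rcomb0 form_rcombr !(formJ H_herm p).
by rewrite rmorphN mulNr addrC.
Qed.

Lemma rcomb_plane a b : exists x y, rcomb u w a b = plane x y.
Proof.
have det_neq0 : a1 * b0 - b1 * a0 != 0.
  apply: contra_neq (lt0r_neq0 (gram_gt0 H_sig g0_neg g1_indep)) => det0.
  by rewrite gram_rcomb det0 expr0n /= mul0r.
rewrite h_rcomb; apply: rcomb_basis.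
have -> : a0 * (- q01 * b0 + q00 * b1) - b0 * (- q01 * a0 + q00 * a1) =
          s * (a1 * b0 - b1 * a0) by rewrite /s; move: (q00) (q01) => q r; ring.
by rewrite mulf_neq0 // lt0r_neq0.
Qed.

Lemma plane_rspan x y : exists a b, plane x y = rcomb u w a b.
Proof. by rewrite h_rcomb rcomb_comp; do 2!eexists. Qed.

Lemma form_plane x y : '[plane x y, plane x y] = (- (s * x ^+ 2 - t * y ^+ 2))%:C.
Proof.
rewrite form_rcombl !(form_rcombr _ _ g0 h) hg0 g0h.
by rewrite g0g0E hhE /s; move: (q00) (t) => q r; ring.
Qed.

Lemma form_plane_p x y : '[plane x y, p] = x%:C * alpha + y%:C * beta.
Proof. exact: form_rcombl. Qed.

Lemma G_plane v : G v -> negative H v ->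
  exists c x y, [/\ c != 0, v = c *: plane x y & 0 < s * x ^+ 2 - t * y ^+ 2].
Proof.
case/G_def=> _ [c [a [b [c_neq0 vE]]]]; have [x [y abE]] := rcomb_plane a b.
rewrite -rcombE abE in vE; rewrite /negative hf_form vE formZZ_lt0 //.
by rewrite form_plane ltc0R oppr_lt0 => den_gt0; exists c, x, y.
Qed.

Lemma plane_G x y : 0 < s * x ^+ 2 - t * y ^+ 2 ->
  G (plane x y) /\ negative H (plane x y).
Proof.
move=> den_gt0; have v_neg : negative H (plane x y).
  by rewrite /negative hf_form form_plane ltc0R oppr_lt0.
split=> //; apply/G_def; split.
  split; last exact: ltW.
  by apply: contraTneq v_neg => ->; rewrite /negative hf_form form0l ltxx.
have [a [b ->]] := plane_rspan x y.
by exists 1, a, b; rewrite scale1r rcombE oner_neq0.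
Qed.

Lemma ta_plane c x y : c != 0 -> 0 < s * x ^+ 2 - t * y ^+ 2 ->
  ta_cg H (c *: plane x y) p = (1 + quad_ratio s t A B C x y / pp)%:C.
Proof.
move=> c_neq0 den_gt0; rewrite /ta_cg taZl // /ta !hf_form (formJ H_herm p (plane x y)).
rewrite form_plane form_plane_p ppE mulcJ_rcomb /A /B /C.
rewrite -rmorphM -fmorph_div -(rmorph1 (real_complex R)) -!rmorphB.
by rewrite /quad_ratio mulNr invrN mulrN opprK invfM mulrA.
Qed.

Lemma cross_ratio_plane c0 c1 : c0 != 0 -> c1 != 0 ->
  hf H (c0 *: g0) p * hf H p (c1 *: g1) / hf H (c0 *: g0) (c1 *: g1) =
  alpha * '[g1, p]^*%C / q01%:C.
Proof.
by move=> c0_neq0 c1_neq0; rewrite cross_ratioZ // !hf_form (formJ H_herm p) g0g1E.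
Qed.

Lemma cross_ratio2_plane c0 c1 : c0 != 0 -> c1 != 0 ->
  hf H p (c1 *: g1) * hf H (c0 *: g0) (c0 *: g0) /
    (hf H (c0 *: g0) (c1 *: g1) * hf H p (c0 *: g0)) =
  '[g1, p]^*%C * q00%:C / (q01%:C * alpha^*%C).
Proof.
move=> c0_neq0 c1_neq0; rewrite cross_ratio2Z // !hf_form.
by rewrite !(formJ H_herm p) g0g0E g0g1E.
Qed.

Lemma Im_alpha_beta_eq0 : (exists x, [/\ G x, in_cgeod H p x & negative H x]) ->
  complex.Im (alpha * beta^*%C) = 0.
Proof.
case=> v [Gv [_ vp] v_neg]; have [c [x [y [c_neq0 vE den_gt0]]]] := G_plane Gv v_neg.
apply: (@Im_mulcJ_eq0 _ _ _ x y).
  move: vp; rewrite hf_form vE formZl form_plane_p => /eqP.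
  by rewrite mulf_eq0 (negbTE c_neq0) => /eqP.
apply: contraTT den_gt0; rewrite negb_or !negbK => /andP[/eqP-> /eqP->].
by rewrite expr0n /= !mulr0 subrr ltxx.
Qed.

Lemma cross_ratio_real c0 c1 : c0 != 0 -> c1 != 0 ->
  (exists x, [/\ G x, in_cgeod H p x & negative H x]) ->
  hf H (c0 *: g0) p * hf H p (c1 *: g1) / hf H (c0 *: g0) (c1 *: g1) \is Num.real.
Proof.
move=> c0_neq0 c1_neq0 /Im_alpha_beta_eq0; rewrite betaJ Im_mulcJ_sub => /eqP.
rewrite mulf_eq0 (negbTE q00_neq0) /= cross_ratio_plane // => /eqP.
by case: (_ * _) => a b /= ->; rewrite rpred_div ?complex_real.
Qed.

Lemma nonreal_cross_ratio c0 c1 : c0 != 0 -> c1 != 0 ->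
  hf H (c0 *: g0) p * hf H p (c1 *: g1) / hf H (c0 *: g0) (c1 *: g1) \isn't Num.real ->
  q01 != 0 /\ complex.Im (alpha * beta^*%C) != 0.
Proof.
move=> c0_neq0 c1_neq0; rewrite (cross_ratio_plane c0_neq0 c1_neq0) => nonreal.
split; first by apply: contraNneq nonreal => ->; rewrite invr0 mulr0 rpred0.
rewrite betaJ Im_mulcJ_sub mulf_neq0 //; apply: contraNneq nonreal.
by case: (_ * _) => a b /= ->; rewrite rpred_div ?complex_real.
Qed.

Section NonReal.
Hypotheses (q01_neq0 : q01 != 0) (Im_neq0 : complex.Im (alpha * beta^*%C) != 0).

Let alpha_neq0 : alpha != 0.
Proof. by apply: contraNneq Im_neq0 => ->; rewrite mul0r. Qed.
Let A_gt0 : 0 < A. Proof. exact: Re_mulcJ_gt0. Qed.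
Let discr_lt0 : B ^+ 2 < A * C. Proof. exact: lagrange_lt. Qed.

Lemma closest_plane : exists x, closest_to_cg H G p x /\
  forall y, closest_to_cg H G p y -> same_point x y.
Proof.
have plZ k x y : plane (k * x) (k * y) = k%:C *: plane x y by exact: rcombZ.
exists (plane 1 (quad_ratio_argmin s t A B C)); split.
  exact: (closest_argmin s_gt0 t_gt0 A_gt0 discr_lt0 pp_gt0 G_plane plane_G ta_plane).
exact: (closest_unique s_gt0 t_gt0 A_gt0 discr_lt0 pp_gt0 G_plane plane_G plZ ta_plane).
Qed.

Lemma ta_geod_plane c0 : c0 != 0 -> G (c0 *: g0) -> negative H (c0 *: g0) ->
  ta_geod_cg H G p = complex.Re (ta_cg H (c0 *: g0) p) <-> B = 0.
Proof.
move=> c0_neq0; rewrite -(rcomb10 g0 h) => Gg g_neg.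
exact: (ta_geod_cg_at10 s_gt0 t_gt0 A_gt0 discr_lt0 pp_gt0 G_plane plane_G ta_plane
  c0_neq0 Gg g_neg).
Qed.

Lemma Re_cross_ratio2_eq1 c0 c1 : c0 != 0 -> c1 != 0 ->
  B = 0 <-> complex.Re (hf H p (c1 *: g1) * hf H (c0 *: g0) (c0 *: g0) /
    (hf H (c0 *: g0) (c1 *: g1) * hf H p (c0 *: g0))) = 1.
Proof.
move=> c0_neq0 c1_neq0; rewrite (cross_ratio2_plane c0_neq0 c1_neq0).
rewrite (Re_mulcJ_div _ _ q01_neq0 alpha_neq0) /B betaJ Re_mulcJ_sub.
split=> [/eqP|/divr1_eq ->]; last exact: subrr.
rewrite subr_eq0 => /eqP ->.
exact/divff/(mulf_neq0 q01_neq0 (lt0r_neq0 A_gt0)).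
Qed.

End NonReal.

Lemma cross_ratio_nonreal c0 c1 : c0 != 0 -> c1 != 0 ->
  G (c0 *: g0) -> negative H (c0 *: g0) ->
  hf H (c0 *: g0) p * hf H p (c1 *: g1) / hf H (c0 *: g0) (c1 *: g1) \isn't Num.real ->
  (exists x, closest_to_cg H G p x /\
     forall y, closest_to_cg H G p y -> same_point x y) /\
  (ta_geod_cg H G p = complex.Re (ta_cg H (c0 *: g0) p) <->
     complex.Re (hf H p (c1 *: g1) * hf H (c0 *: g0) (c0 *: g0) /
       (hf H (c0 *: g0) (c1 *: g1) * hf H p (c0 *: g0))) = 1).
Proof.
move=> c0_neq0 c1_neq0 Gg g_neg /(nonreal_cross_ratio c0_neq0 c1_neq0) [q01_neq0 Im_neq0].
split; first exact: closest_plane.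
apply: iff_trans (ta_geod_plane Im_neq0 c0_neq0 Gg g_neg) _.
exact: (Re_cross_ratio2_eq1 q01_neq0 Im_neq0 c0_neq0 c1_neq0).
Qed.

End Geodesic.

Theorem lemma4p1 (R : realType) (H : 'M[R[i]]_3) (p : 'rV[R[i]]_3)
    (G : 'rV[R[i]]_3 -> Prop) (g g' : 'rV[R[i]]_3) :
  herm_sig_ppm H ->
  positive H p ->
  is_geodesic H G ->
  (exists x, G x /\ ~ in_cgeod H p x) ->
  G g -> G g' -> negative H g -> negative H g' -> ~ same_point g g' ->
  ((exists x, [/\ G x, in_cgeod H p x & negative H x]) ->
     hf H g p * hf H p g' / hf H g g' \is Num.real) /\
  (hf H g p * hf H p g' / hf H g g' \isn't Num.real ->
     (exists x, closest_to_cg H G p x /\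
        forall y, closest_to_cg H G p y -> same_point x y) /\
     (ta_geod_cg H G p = complex.Re (ta_cg H g p) <->
        complex.Re (hf H p g' * hf H g g / (hf H g g' * hf H p g)) = 1)).
Proof.
move=> H_sig p_pos [u [w [_ uw_real _ G_def]]] _ Gg Gg' g_neg g'_neg g_g'.
have [_ [c0 [a0 [b0 [c0_neq0 gE]]]]] := proj1 (G_def g) Gg.
have [_ [c1 [a1 [b1 [c1_neq0 g'E]]]]] := proj1 (G_def g') Gg'.
rewrite -rcombE in gE; rewrite -rcombE in g'E.
rewrite hf_form in uw_real; rewrite /positive hf_form in p_pos.
have g'_neq0 : g' != 0.
  by apply: contraTneq g'_neg => ->; rewrite /negative hf_form form0l ltxx.
have g1_indep := not_same_point_indep c0_neq0 g'_neq0 gE g'E g_g'.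
have g0_neg : form conjc H (rcomb u w a0 b0) (rcomb u w a0 b0) < 0.
  by rewrite -(formZZ_lt0 _ _ c0_neq0) -gE -hf_form.
rewrite gE g'E in Gg g_neg *.
split; first exact: (cross_ratio_real H_sig uw_real G_def g0_neg g1_indep c0_neq0 c1_neq0).
exact: (cross_ratio_nonreal H_sig uw_real G_def p_pos g0_neg g1_indep c0_neq0 c1_neq0).
Qed.
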